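(* For every $n\ge1$, $$\sum_{\sigma\in\mathfrak S_n}u^{{\rm M}(\sigma)}v^{{\rm des}(\sigma)}w^{{\rm asc}(\sigma)}\alpha^{{\rm LRmin}(\sigma)+{\rm RLmin}(\sigma)-2}=\sum_{\sigma\in\mathfrak S_n}x^{{\rm des}(\sigma)}y^{{\rm asc}(\sigma)}\alpha^{{\rm LRmin}(\sigma)+{\rm RLmin}(\sigma)-2},$$ where $x=\frac{(w+v)-\sqrt{(w+v)^2-4uvw}}{2}$ and $y=\frac{(w+v)+\sqrt{(w+v)^2-4uvw}}{2}$.
   Context: For $\sigma=\sigma_1\cdots\sigma_n\in\mathfrak S_n$: ${\rm asc}(\sigma)$, ${\rm des}(\sigma)$ are the numbers of $i\in[n-1]$ with $\sigma_i<\sigma_{i+1}$, resp. $\sigma_i>\sigma_{i+1}$; ${\rm M}(\sigma)$ is the number of $i$ with $1<i<n$ and $\sigma_{i-1}<\sigma_i>\sigma_{i+1}$; ${\rm LRmin}(\sigma)$ is the number of $i$ with $\sigma_j>\sigma_i$ for all $j<i$; ${\rm RLmin}(\sigma)$ is the number of $i$ with $\sigma_j>\sigma_i$ for all $j>i$. *)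

From mathcomp Require Import all_boot all_order all_algebra all_fingroup.
Set Implicit Arguments. Unset Strict Implicit. Unset Printing Implicit Defensive.

(* One-line notation of a permutation of 'I_n as the word sigma_1 ... sigma_n
   (values shifted to 0..n-1, positions 0-based; statistics are invariant). *)
Definition pword n (s : 'S_n) : seq nat := [seq val (s i) | i <- enum 'I_n].

Definition asc_w (w : seq nat) : nat :=
  count (fun i => nth 0 w i < nth 0 w i.+1) (iota 0 (size w).-1).
Definition des_w (w : seq nat) : nat :=
  count (fun i => nth 0 w i > nth 0 w i.+1) (iota 0 (size w).-1).
(* M: # interior positions j = i+1 (1 < j < n in 1-based indexing) that are peaks *)
Definition peak_w (w : seq nat) : nat :=
  count (fun i => (nth 0 w i < nth 0 w i.+1) && (nth 0 w i.+1 > nth 0 w i.+2))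
        (iota 0 (size w - 2)).
Definition lrmin_w (w : seq nat) : nat :=
  count (fun i => all (fun j => nth 0 w j > nth 0 w i) (iota 0 i)) (iota 0 (size w)).
Definition rlmin_w (w : seq nat) : nat :=
  count (fun i => all (fun j => nth 0 w j > nth 0 w i) (iota i.+1 (size w - i.+1)))
        (iota 0 (size w)).

Definition asc n (s : 'S_n) := asc_w (pword s).
Definition des n (s : 'S_n) := des_w (pword s).
Definition M n (s : 'S_n) := peak_w (pword s).
Definition LRmin n (s : 'S_n) := lrmin_w (pword s).
Definition RLmin n (s : 'S_n) := rlmin_w (pword s).

(* Both sides are sums over permutations of a weight g (M, asc, LRmin + RLmin - 2), since
   des = n - 1 - asc.  Permutations of {0, ..., k} arise by inserting the letter k into those of
   {0, ..., k - 1}, and this changes the three statistics in a way that only depends on their old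
   values; hence the weight sum for k + 1 letters is the weight sum for k letters of a transformed
   weight [insert_weight k g].  By Pascal's rule the coordinates
   [binom_moment k g p e = \sum_j 'C(k - 1 - 2p, j) g (p, p + j, e)] of [insert_weight k g] are
   combinations of those of g for k + 1 letters, so by induction the weight sum only depends on
   these coordinates.  For g (p, a, e) = c^p x^(k-1-a) y^a d^e they equal
   (c x y)^p (x + y)^(k-1-2p) d^e, which is the same for (c, x, y) = (u, v, w) and (1, x, y), as
   x and y are the roots of T^2 - (v + w) T + u v w. *)

From mathcomp Require Import all_boot all_order all_algebra all_fingroup.
From mathcomp Require Import zify ring.
Set Implicit Arguments. Unset Strict Implicit. Unset Printing Implicit Defensive.
Import GRing.Theory Num.Theory.

Definition insert j m (w : seq nat) := take j w ++ m :: drop j w.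

Lemma size_insert j m w : j <= size w -> size (insert j m w) = (size w).+1.
Proof. by move=> hj; rewrite /insert size_cat /= size_take size_drop; case: ltnP; lia. Qed.

Lemma nth_insert j m w i : j <= size w ->
  nth 0 (insert j m w) i = if i < j then nth 0 w i else if i == j then m else nth 0 w i.-1.
Proof.
move=> hj; rewrite /insert nth_cat size_take.
have -> : (if j < size w then j else size w) = j by case: ltnP; lia.
case: ltnP => hi; first by rewrite nth_take.
case: eqP => [->|hne]; first by rewrite subnn.
have -> : i - j = (i - j).-1.+1 by lia.
by rewrite /= nth_drop; congr nth; lia.
Qed.

Ltac resolve_ifs := repeat match goal with
  | |- context [ if ?c then _ else _ ] =>
      let h := fresh "h" in case: ifP => h; try (exfalso; lia) end.

Lemma count_iota_succ (P : pred nat) a n :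
  count P (iota a.+1 n) = count (fun i => P i.+1) (iota a n).
Proof. by rewrite -add1n iotaDl count_map. Qed.

(* Counting over a word with a factor of length [r] at [a] replaced by one of length [r.+1]. *)
Lemma count_iota_window (Px Pw : pred nat) a r b n :
  n = a + r + b ->
  (forall i, i < a -> Px i = Pw i) ->
  (forall i, a + r <= i < n -> Px i.+1 = Pw i) ->
  count Px (iota 0 n.+1) + count Pw (iota a r)
  = count Pw (iota 0 n) + count Px (iota a r.+1).
Proof.
move=> -> lt_a ge_ar; rewrite -addSn -addnS !iotaD !count_cat !add0n.
have -> : count Px (iota 0 a) = count Pw (iota 0 a).
  by apply: eq_in_count => i; rewrite mem_iota => /andP[_]; apply: lt_a.
have -> : count Px (iota (a + r.+1) b) = count Pw (iota (a + r) b).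
  by rewrite addnS count_iota_succ; apply: eq_in_count => i; rewrite mem_iota => /ge_ar.
lia.
Qed.

Lemma count_iota_window0 (Px Pw : pred nat) a n :
  a <= n ->
  (forall i, i < a -> Px i = Pw i) ->
  (forall i, a <= i < n -> Px i.+1 = Pw i) ->
  count Px (iota 0 n.+1) = count Pw (iota 0 n) + Px a.
Proof.
move=> a_le_n lt_a ge_a; have := @count_iota_window Px Pw a 0 (n - a) n.
by rewrite !addn0 /= addn0; apply=> //; lia.
Qed.

Definition ascent_at (w : seq nat) : pred nat := fun i => nth 0 w i < nth 0 w i.+1.

Definition peak_at (w : seq nat) : pred nat :=
  fun i => ascent_at w i && (nth 0 w i.+1 > nth 0 w i.+2).

Lemma ascE w : asc_w w = count (ascent_at w) (iota 0 (size w).-1).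
Proof. by []. Qed.

Lemma peakE w : peak_w w = count (peak_at w) (iota 0 (size w - 2)).
Proof. by []. Qed.

Lemma peak_at_ascent w i : peak_at w i -> ascent_at w i.
Proof. by case/andP. Qed.

Lemma peak_at_descent w i : peak_at w i -> ~~ ascent_at w i.+1.
Proof. by case/andP=> _; rewrite /ascent_at -leqNgt => /ltnW. Qed.

Lemma perm_insert j m w : perm_eq (insert j m w) (m :: w).
Proof. by rewrite /insert -cat1s perm_catCA cat_take_drop. Qed.

Section InsertAt.

Variables (j m : nat) (w : seq nat).
Hypothesis j_le_size : j <= size w.

Lemma ascent_at_insert_lt i : i.+1 < j -> ascent_at (insert j m w) i = ascent_at w i.
Proof. by move=> hi; rewrite /ascent_at !nth_insert //; resolve_ifs. Qed.

Lemma ascent_at_insert_ge i : j <= i -> ascent_at (insert j m w) i.+1 = ascent_at w i.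
Proof. by move=> hi; rewrite /ascent_at !nth_insert //; resolve_ifs. Qed.

Lemma peak_at_insert_lt i : i.+2 < j -> peak_at (insert j m w) i = peak_at w i.
Proof. by move=> hi; rewrite /peak_at /ascent_at !nth_insert //; resolve_ifs. Qed.

Lemma peak_at_insert_ge i : j <= i -> peak_at (insert j m w) i.+1 = peak_at w i.
Proof. by move=> hi; rewrite /peak_at /ascent_at !nth_insert //; resolve_ifs. Qed.

Lemma size_take_le : size (take j w) = j.
Proof. by rewrite size_take; case: ltnP; lia. Qed.

Lemma take_insert_le i : i <= j -> take i (insert j m w) = take i w.
Proof.
move=> hi; rewrite /insert take_cat size_take_le ltn_neqAle hi andbT.
case: eqP => [->|_]; last by rewrite take_takel.
by rewrite subnn take0 cats0.
Qed.

Lemma take_insert_ge i : j <= i -> take i.+1 (insert j m w) = insert j m (take i w).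
Proof.
move=> hi; rewrite /insert take_cat size_take_le ltnNge ltnW //= subSn //.
by rewrite take_takel //= -{2}(subnK hi) -take_drop.
Qed.

Lemma drop_insert_ge i : j <= i -> drop i.+1 (insert j m w) = drop i w.
Proof.
move=> hi; rewrite /insert drop_cat size_take_le ltnNge ltnW //= subSn //.
by rewrite /= drop_drop subnK.
Qed.

Lemma drop_insert_le i : i <= j -> drop i (insert j m w) = insert (j - i) m (drop i w).
Proof.
rewrite leq_eqVlt => /predU1P[->|hi]; last first.
  by rewrite /insert drop_cat size_take_le hi take_drop drop_drop !subnK // ltnW.
by rewrite /insert drop_cat size_take_le ltnn !subnn take0 !drop0.
Qed.

End InsertAt.

Definition below (m : nat) (w : seq nat) := all (fun a => a < m) w.

Section InsertMax.

Variables (m : nat) (w : seq nat).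
Hypothesis w_lt_m : below m w.

Lemma nth_lt_bound i : i < size w -> nth 0 w i < m.
Proof. exact: (all_nthP 0 w_lt_m). Qed.

Lemma bound_lt_nthF i : i < size w -> (m < nth 0 w i) = false.
Proof. by move=> hi; apply/negbTE; rewrite -leqNgt ltnW // nth_lt_bound. Qed.

Lemma asc_insert_front : 0 < size w -> asc_w (insert 0 m w) = asc_w w.
Proof.
move=> w_gt0; rewrite !ascE size_insert // -(prednK w_gt0) /= count_iota_succ.
rewrite {1}/ascent_at !nth_insert //= bound_lt_nthF ?prednK //=.
by apply: eq_in_count => i _; apply: ascent_at_insert_ge.
Qed.

Lemma asc_insert_back : 0 < size w -> asc_w (insert (size w) m w) = (asc_w w).+1.
Proof.
move=> w_gt0; rewrite !ascE size_insert //=.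
set x := insert _ _ _; rewrite -{1}(prednK w_gt0) -addn1 iotaD count_cat.
rewrite /= {2}/ascent_at /x !nth_insert // prednK // add0n leqnn ltnn eqxx.
rewrite nth_lt_bound ?prednK // addn0 addn1; congr _.+1.
by apply: eq_in_count => i; rewrite mem_iota => hi; apply: ascent_at_insert_lt; lia.
Qed.

Lemma asc_insert_inner g b : size w = g + 2 + b ->
  asc_w (insert g.+1 m w) + ascent_at w g = (asc_w w).+1.
Proof.
move=> hs; have hj : g.+1 <= size w by lia.
have up : ascent_at (insert g.+1 m w) g.
  by rewrite /ascent_at !nth_insert //; resolve_ifs; rewrite nth_lt_bound //; lia.
have down : ascent_at (insert g.+1 m w) g.+1 = false.
  by rewrite /ascent_at !nth_insert //; resolve_ifs; rewrite bound_lt_nthF //; lia.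
rewrite !ascE size_insert // hs /=.
have -> : (g + 2 + b).-1 = g + 1 + b by lia.
have -> : g + 2 + b = (g + 1 + b).+1 by lia.
have lt_g i : i < g -> ascent_at (insert g.+1 m w) i = ascent_at w i.
  by move=> hi; apply: ascent_at_insert_lt; lia.
have ge_g i : g + 1 <= i < g + 1 + b -> ascent_at (insert g.+1 m w) i.+1 = ascent_at w i.
  by move=> hi; apply: ascent_at_insert_ge; lia.
by have := count_iota_window (erefl (g + 1 + b)) lt_g ge_g; rewrite /= up down; lia.
Qed.

Lemma peak_insert_front : peak_w (insert 0 m w) = peak_w w.
Proof.
rewrite !peakE size_insert //; case hs: (size w) => [|[|k]] //.
rewrite !subSS !subn0 -[iota 0 k.+1]/(0 :: iota 1 k) /= count_iota_succ.
have -> : peak_at (insert 0 m w) 0 = false.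
  by rewrite /peak_at /ascent_at !nth_insert //= bound_lt_nthF ?hs.
by apply: eq_in_count => i _; apply: peak_at_insert_ge.
Qed.

Lemma peak_insert_back : peak_w (insert (size w) m w) = peak_w w.
Proof.
rewrite !peakE size_insert //; case hs: (size w) => [|[|k]] //.
rewrite !subSS !subn0 -[in iota _ _]addn1 iotaD count_cat /= add0n addn0.
have -> : peak_at (insert k.+2 m w) k = false.
  rewrite /peak_at /ascent_at !nth_insert ?hs //; resolve_ifs.
  by rewrite bound_lt_nthF ?hs // andbF.
rewrite addn0; apply: eq_in_count => i; rewrite mem_iota => hi.
by apply: peak_at_insert_lt; rewrite ?hs //; lia.
Qed.

Lemma peak_insert_inner g b : size w = g + 2 + b ->
  peak_w (insert g.+1 m w) + ((0 < g) && peak_at w g.-1) + ((0 < b) && peak_at w g)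
  = (peak_w w).+1.
Proof.
move=> hs; have hj : g.+1 <= size w by lia.
rewrite !peakE size_insert // hs.
set x := insert g.+1 m w.
have x_nth i : nth 0 x i = if i < g.+1 then nth 0 w i else if i == g.+1 then m else nth 0 w i.-1.
  exact: nth_insert.
have pre : 0 < g -> peak_at x g.-1 = false.
  move=> g_gt0; rewrite /peak_at /ascent_at !x_nth prednK //; resolve_ifs.
  by rewrite bound_lt_nthF ?andbF //; lia.
have top : peak_at x g.
  by rewrite /peak_at /ascent_at !x_nth; resolve_ifs; rewrite !nth_lt_bound //; lia.
have post : peak_at x g.+1 = false.
  by rewrite /peak_at /ascent_at !x_nth; resolve_ifs; rewrite bound_lt_nthF //; lia.
have -> : (g + 2 + b).+1 - 2 = (g + b).+1 by lia.
have -> : g + 2 + b - 2 = g + b by lia.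
set r := (0 < g) + (0 < b).
have W : count (peak_at x) (iota 0 (g + b).+1) + count (peak_at w) (iota g.-1 r)
       = count (peak_at w) (iota 0 (g + b)) + count (peak_at x) (iota g.-1 r.+1).
  apply: (@count_iota_window _ _ g.-1 r b.-1) => [|i hi|i hi].
  - by rewrite /r; case: (g) (b) => [|?] [|?] /=; lia.
  - by apply: peak_at_insert_lt => //; lia.
  - by apply: peak_at_insert_ge => //; move: hi; rewrite /r; case: (g) (b) => [|?] [|?] /=; lia.
clearbody x; move: W; rewrite /r.
by case: g {hs hj x_nth r} pre top post => [|g] pre top post; case: b => [|b] /=;
  rewrite ?top ?post ?pre //; lia.
Qed.

End InsertMax.

Definition lrmin_at (w : seq nat) : pred nat :=
  fun i => all (fun k => nth 0 w i < nth 0 w k) (iota 0 i).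

Definition rlmin_at (w : seq nat) : pred nat :=
  fun i => all (fun k => nth 0 w i < nth 0 w k) (iota i.+1 (size w - i.+1)).

Lemma lrminE w : lrmin_w w = count (lrmin_at w) (iota 0 (size w)).
Proof. by []. Qed.

Lemma rlminE w : rlmin_w w = count (rlmin_at w) (iota 0 (size w)).
Proof. by []. Qed.

Lemma lrmin_at_take w i : i <= size w ->
  lrmin_at w i = all (fun a => nth 0 w i < a) (take i w).
Proof. by move=> hi; rewrite /lrmin_at -(map_nth_iota0 0) // all_map. Qed.

Lemma rlmin_at_drop w i : rlmin_at w i = all (fun a => nth 0 w i < a) (drop i.+1 w).
Proof.
by rewrite /rlmin_at -[drop i.+1 w]take_size -(map_nth_iota 0) ?size_drop // all_map.
Qed.

Section InsertMaxMinima.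

Variables (j m : nat) (w : seq nat).
Hypotheses (w_lt_m : below m w) (j_le_size : j <= size w).

Lemma lrmin_insert : lrmin_w (insert j m w) = lrmin_w w + (j == 0).
Proof.
have size_x : size (insert j m w) = (size w).+1 by apply: size_insert.
rewrite !lrminE size_x.
have <- : lrmin_at (insert j m w) j = (j == 0).
  rewrite lrmin_at_take ?size_x; last lia.
  rewrite take_insert_le // nth_insert // ltnn eqxx.
  case: j j_le_size => [|j'] hj //=; case: w w_lt_m hj => //= a w' /andP[a_lt _] _.
  by rewrite ltnNge ltnW.
apply: count_iota_window0 => // [i hi|i /andP[hi hi']].
- rewrite !lrmin_at_take ?size_x; try lia.
  by rewrite take_insert_le ?nth_insert ?hi //; lia.
- rewrite !lrmin_at_take ?size_x; try lia.
  rewrite take_insert_ge // nth_insert // ltnNge ltnW ?ltnS //= gtn_eqF ?ltnS //=.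
  by rewrite (perm_all _ (perm_insert j m _)) /= (nth_lt_bound w_lt_m).
Qed.

Lemma rlmin_insert : rlmin_w (insert j m w) = rlmin_w w + (j == size w).
Proof.
have size_x : size (insert j m w) = (size w).+1 by apply: size_insert.
rewrite !rlminE size_x.
have <- : rlmin_at (insert j m w) j = (j == size w).
  rewrite rlmin_at_drop drop_insert_ge // nth_insert // ltnn eqxx.
  case: (ltngtP j (size w)) => [hj||->]; [|lia|by rewrite drop_size].
  rewrite (drop_nth 0 hj) /= ltnNge ltnW //; exact: nth_lt_bound.
apply: count_iota_window0 => // [i hi|i /andP[hi hi']].
- rewrite !rlmin_at_drop drop_insert_le // nth_insert // hi.
  by rewrite (perm_all _ (perm_insert _ m _)) /= (nth_lt_bound w_lt_m) //; lia.
- have hi1 : j <= i.+1 by lia.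
  rewrite !rlmin_at_drop drop_insert_ge // nth_insert // ltnNge ltnW ?ltnS //=.
  by rewrite gtn_eqF ?ltnS.
Qed.

End InsertMaxMinima.

Lemma lrmin_w_gt0 w : 0 < size w -> 0 < lrmin_w w.
Proof. by case: w. Qed.

Lemma rlmin_w_gt0 w : 0 < size w -> 0 < rlmin_w w.
Proof.
move=> w_gt0; rewrite rlminE -{1}(prednK w_gt0) -[in iota _ _]addn1 iotaD count_cat /= add0n.
by rewrite rlmin_at_drop prednK // drop_size /=; lia.
Qed.

Definition extra_minima w := lrmin_w w + rlmin_w w - 2.

Section InsertMaxStats.

Variables (m : nat) (w : seq nat).
Hypotheses (w_lt_m : below m w) (w_gt0 : 0 < size w).

Lemma extra_minima_insert_front : extra_minima (insert 0 m w) = (extra_minima w).+1.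
Proof.
have := lrmin_w_gt0 w_gt0; have := rlmin_w_gt0 w_gt0.
rewrite /extra_minima lrmin_insert ?rlmin_insert // eqxx eq_sym (gtn_eqF w_gt0).
by move: (lrmin_w w) (rlmin_w w) => l r; lia.
Qed.

Lemma extra_minima_insert_back : extra_minima (insert (size w) m w) = (extra_minima w).+1.
Proof.
have := lrmin_w_gt0 w_gt0; have := rlmin_w_gt0 w_gt0.
rewrite /extra_minima lrmin_insert ?rlmin_insert // eqxx (gtn_eqF w_gt0).
by move: (lrmin_w w) (rlmin_w w) => l r; lia.
Qed.

Lemma extra_minima_insert_inner j : 0 < j < size w ->
  extra_minima (insert j m w) = extra_minima w.
Proof.
case/andP=> j_gt0 j_lt; have j_le := ltnW j_lt.
rewrite /extra_minima lrmin_insert ?rlmin_insert //.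
by rewrite gtn_eqF // ltn_eqF // !addn0.
Qed.

End InsertMaxStats.

(* Inserting a new largest letter into a word with [k] letters, [p] peaks and [a] ascents adds a
   left-to-right (right-to-left) minimum when it goes in front (at the back, where it also adds an
   ascent).  In one of the [k.-1] inner slots it becomes a peak, replacing a neighbouring peak in
   [2 p] of the slots, and it adds an ascent when the slot was a descent. *)
Definition insert_weight (V : nmodType) k (g : nat -> nat -> nat -> V) p a e : V :=
  (g p a e.+1 + g p a.+1 e.+1 + (g p a e + g p a.+1 e) *+ p
   + (g p.+1 a e *+ (a - p) + g p.+1 a.+1 e *+ (k.-1 - a - p)))%R.

Lemma count_andC (I : Type) (P Q : pred I) s :
  count (fun i => P i && Q i) s + count (fun i => P i && ~~ Q i) s = count P s.
Proof. by elim: s => //= i s <-; case: (P i); case: (Q i) => /=; lia. Qed.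

Section InsertSlots.

Variables (m : nat) (w : seq nat).
Hypotheses (w_lt_m : below m w) (w_gt0 : 0 < size w).

Let up := ascent_at w.
Let peak_right i := (i.+2 < size w) && peak_at w i.
Let peak_left i := (0 < i) && peak_at w i.-1.

Lemma count_ascent_to_peak :
  count (fun i => up i && peak_right i) (iota 0 (size w).-1) = peak_w w.
Proof.
rewrite peakE /peak_right; case hs: (size w) w_gt0 => [//|k] _ /=.
transitivity (count (fun i => (i.+2 < k.+1) && peak_at w i) (iota 0 k)).
  apply: eq_count => i; rewrite /up.
  by case: (boolP (peak_at w i)) => [/peak_at_ascent ->|_]; rewrite ?andbF.
case: k {hs} => // k; rewrite -[in iota _ _]addn1 iotaD count_cat /= add0n ltnn /=.
rewrite !subSS subn0 !addn0; apply: eq_in_count => i.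
by rewrite mem_iota => /andP[_ hi]; rewrite !ltnS hi.
Qed.

Lemma count_descent_from_peak :
  count (fun i => ~~ up i && peak_left i) (iota 0 (size w).-1) = peak_w w.
Proof.
rewrite peakE /peak_left; case hs: (size w) w_gt0 => [//|[|k]] _ //=.
rewrite count_iota_succ andbF add0n !subSS subn0; apply: eq_count => i /=; rewrite /up.
by case: (boolP (peak_at w i)) => [/peak_at_descent ->|_]; rewrite ?andbF.
Qed.

Variables (V : nmodType) (g : nat -> nat -> nat -> V).
Let p := peak_w w.
Let a := asc_w w.
Let e := extra_minima w.

Lemma insert_inner_slot i : i.+1 < size w ->
  g (peak_w (insert i.+1 m w)) (asc_w (insert i.+1 m w)) (extra_minima (insert i.+1 m w))
  = if up i then (if peak_right i then g p a e else g p.+1 a e)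
    else if peak_left i then g p a.+1 e else g p.+1 a.+1 e.
Proof.
move=> hi; have hs : size w = i + 2 + (size w - i - 2) by lia.
have := asc_insert_inner w_lt_m hs; have := peak_insert_inner w_lt_m hs.
rewrite extra_minima_insert_inner // -subnDA subn_gt0 addn2.
rewrite /up /peak_left /peak_right -/p -/a -/e.
case: (boolP (ascent_at w i)) => hA.
- have -> : (0 < i) && peak_at w i.-1 = false.
    by apply/negbTE/negP => /andP[i_gt0 /peak_at_descent]; rewrite prednK // hA.
  by case: ifP => hC hp ha; congr g; lia.
- have -> : (i.+2 < size w) && peak_at w i = false.
    by apply/negbTE/negP => /andP[_ /peak_at_ascent]; apply/negP.
  by case: ifP => hB hp ha; congr g; lia.
Qed.

Lemma sum_insert_slots :
  (\sum_(j <- iota 0 (size w).+1)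
     g (peak_w (insert j m w)) (asc_w (insert j m w)) (extra_minima (insert j m w))
  = insert_weight (size w) g p a e)%R.
Proof.
have slots : iota 0 (size w).+1 = 0 :: iota 1 (size w).-1 ++ [:: size w].
  by case: (size w) w_gt0 => // k _; rewrite -[k.+2]addn1 iotaD.
rewrite slots big_cons big_cat big_seq1 /=.
rewrite (peak_insert_front w_lt_m) (asc_insert_front w_lt_m w_gt0).
rewrite (extra_minima_insert_front w_lt_m w_gt0) (peak_insert_back w_lt_m).
rewrite (asc_insert_back w_lt_m w_gt0) (extra_minima_insert_back w_lt_m w_gt0).
rewrite -[1]/(1 + 0) iotaDl big_map.
under eq_big_seq => i.
  rewrite mem_iota add0n => hi; rewrite insert_inner_slot; last lia.
  over.
rewrite -/p -/a -/e big_if /= !big_if /= !big_const_seq !iter_addr_0.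
set s := iota 0 (size w).-1.
have c_up : count up s = a by [].
have c_down : count (fun i => ~~ up i) s = ((size w).-1 - a)%N.
  have : count up s + count (fun i => ~~ up i) s = size s := count_predC up s.
  by rewrite c_up size_iota; lia.
have c_up_right : count (fun i => up i && peak_right i) s = p := count_ascent_to_peak.
have c_down_left : count (fun i => ~~ up i && peak_left i) s = p := count_descent_from_peak.
have c_up_nright : count (fun i => up i && ~~ peak_right i) s = (a - p)%N.
  by have := count_andC up peak_right s; rewrite c_up c_up_right; lia.
have c_down_nleft : count (fun i => ~~ up i && ~~ peak_left i) s = ((size w).-1 - a - p)%N.
  by have := count_andC (fun i => ~~ up i) peak_left s; rewrite c_down c_down_left; lia.
rewrite c_up_right c_up_nright c_down_left c_down_nleft /insert_weight mulrnDl.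
by rewrite addrACA [(_ + g p a.+1 e.+1)%R]addrC !addrA.
Qed.

End InsertSlots.

Section InsertRem.

Variables (j k : nat) (w : seq nat).

Lemma index_insert : j <= size w -> k \notin w -> index k (insert j k w) = j.
Proof.
move=> hj kw; rewrite /insert index_cat size_take_le //= eqxx addn0.
by rewrite ifF //; apply/negbTE; apply: contra kw; apply: mem_take.
Qed.

Lemma rem_insert : j <= size w -> k \notin w -> rem k (insert j k w) = w.
Proof.
move=> hj kw; rewrite remE index_insert // take_insert_le // drop_insert_ge //.
exact: cat_take_drop.
Qed.

End InsertRem.

Lemma insert_index_rem k w : k \in w -> insert (index k w) k (rem k w) = w.
Proof.
move=> kw; have hj : index k w < size w by rewrite index_mem.
rewrite remE /insert take_cat drop_cat size_take hj ltnn subnn take0 drop0 cats0.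
by rewrite -[RHS](cat_take_drop (index k w)) (drop_nth 0 hj) nth_index.
Qed.

Definition perm_word k (w : seq nat) := [&& uniq w, size w == k & below k w].

Fixpoint perm_words k : seq (seq nat) :=
  if k is k'.+1 then [seq insert j k' w | w <- perm_words k', j <- iota 0 k] else [:: [::]].

Lemma perm_word_notin k w : perm_word k w -> k \notin w.
Proof. by case/and3P=> _ _ /allP w_lt; apply/negP => /w_lt; rewrite ltnn. Qed.

Lemma perm_word_insert j k w : j <= k -> perm_word k w -> perm_word k.+1 (insert j k w).
Proof.
move=> hj kw; have k_notin := perm_word_notin kw; case/and3P: kw => w_uniq /eqP w_size w_lt.
have P := perm_insert j k w; apply/and3P; split.
- by rewrite (perm_uniq P) /= k_notin.
- by rewrite (perm_size P) /= w_size.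
- by rewrite /below (perm_all _ P) /= ltnSn; apply: sub_all w_lt => a; apply: ltnW.
Qed.

Lemma perm_word_rem k w : perm_word k.+1 w -> k \in w /\ perm_word k (rem k w).
Proof.
case/and3P=> w_uniq /eqP w_size w_lt.
have kw : k \in w.
  apply: contraT => kw; have : size w <= size (iota 0 k).
    apply: uniq_leq_size => // a aw; rewrite mem_iota /=.
    by have := allP w_lt a aw; rewrite ltnS leq_eqVlt; case: eqP aw kw => // -> ->.
  by rewrite size_iota w_size ltnn.
split=> //; apply/and3P; split; first exact: rem_uniq.
  by rewrite size_rem // w_size.
rewrite /below rem_filter // all_filter; apply: sub_all w_lt => a /= a_lt.
by apply/implyP; move: a_lt; rewrite ltnS leq_eqVlt => /predU1P[->|]; rewrite ?eqxx.
Qed.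

Lemma mem_perm_words k w : (w \in perm_words k) = perm_word k w.
Proof.
elim: k w => [|k IH] w.
  by case: w => [|a w]; rewrite /perm_word //= andbF.
apply/allpairsP/idP => [[[w' j] [w'_in j_in ->]]|kw].
  by apply: perm_word_insert; [rewrite mem_iota in j_in | rewrite -IH].
have [k_in kw'] := perm_word_rem kw; exists (rem k w, index k w).
rewrite IH mem_iota insert_index_rem //; split=> //.
by case/and3P: kw => _ /eqP <- _; rewrite index_mem.
Qed.

Lemma uniq_perm_words k : uniq (perm_words k).
Proof.
elim: k => [|k IH] //; apply: allpairs_uniq => //; first exact: iota_uniq.
move=> [w1 j1] [w2 j2] /allpairsP[[w1' j1'] [w1_in j1_in [-> ->]]].
move=> /allpairsP[[w2' j2'] [w2_in j2_in [-> ->]]] /= eq_ins.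
move: w1_in w2_in j1_in j2_in; rewrite !mem_perm_words !mem_iota /= => kw1 kw2 hj1 hj2.
have s1 : j1' <= size w1' by case/and3P: kw1 => _ /eqP ->.
have s2 : j2' <= size w2' by case/and3P: kw2 => _ /eqP ->.
have n1 := perm_word_notin kw1; have n2 := perm_word_notin kw2.
have := congr1 (index k) eq_ins; have := congr1 (rem k) eq_ins.
by rewrite !rem_insert // !index_insert // => -> ->.
Qed.

Lemma perm_word_pword n (s : 'S_n) : perm_word n (pword s).
Proof.
apply/and3P; split.
- by rewrite map_inj_uniq ?enum_uniq // => i j /val_inj /perm_inj.
- by rewrite size_map size_enum_ord.
- by rewrite /below all_map; apply/allP => i _ /=.
Qed.

Lemma pword_inj n : injective (@pword n).
Proof.
move=> s t /eq_in_map st; apply/permP => i; apply/val_inj.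
by apply: st; rewrite mem_enum.
Qed.

Lemma perm_wordP n w : perm_word n w -> exists s : 'S_n, pword s = w.
Proof.
case/and3P=> w_uniq /eqP w_size w_lt.
have w_lt_n (i : 'I_n) : nth 0 w i < n by apply: (all_nthP 0 w_lt); rewrite w_size.
pose f i := Ordinal (w_lt_n i).
have f_inj : injective f.
  move=> i j /(congr1 val) /eqP; rewrite nth_uniq ?w_size // => /eqP; exact: val_inj.
exists (perm f_inj); rewrite /pword -[RHS](take_size w) -(map_nth_iota0 0) // w_size.
by rewrite -val_enum_ord -map_comp; apply: eq_map => i /=; rewrite permE.
Qed.

Lemma big_pword (V : nmodType) n (F : seq nat -> V) :
  (\sum_(s : 'S_n) F (pword s) = \sum_(w <- perm_words n) F w)%R.
Proof.
rewrite -(big_map (@pword n) xpredT); apply/perm_big/uniq_perm.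
- by rewrite map_inj_uniq ?index_enum_uniq //; apply: pword_inj.
- exact: uniq_perm_words.
move=> w; rewrite mem_perm_words; apply/mapP/idP => [[s _ ->]|/perm_wordP[s <-]].
  exact: perm_word_pword.
by exists s; rewrite ?mem_index_enum.
Qed.

Lemma des_perm_word n w : perm_word n w -> des_w w = n.-1 - asc_w w.
Proof.
case/and3P=> w_uniq /eqP w_size _; rewrite /des_w ascE w_size.
rewrite -[X in X - _](size_iota 0 n.-1) -(count_predC (ascent_at w)) addKn.
apply: eq_in_count => i; rewrite mem_iota /ascent_at /= => hi.
have hne : nth 0 w i != nth 0 w i.+1 by rewrite nth_uniq ?w_size //; lia.
by rewrite ltn_neqAle eq_sym hne leqNgt.
Qed.

Lemma des_perm n (s : 'S_n) : des s = n.-1 - asc s.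
Proof. exact: des_perm_word (perm_word_pword s). Qed.

Local Open Scope ring_scope.

Definition weight_sum (V : nmodType) k (g : nat -> nat -> nat -> V) : V :=
  \sum_(w <- perm_words k) g (peak_w w) (asc_w w) (extra_minima w).

Lemma sum_perm_weight (V : nmodType) n (g : nat -> nat -> nat -> V) :
  \sum_(s : 'S_n) g (M s) (asc s) (LRmin s + RLmin s - 2)%N = weight_sum n g.
Proof.
by rewrite /weight_sum -(big_pword n (fun w => g (peak_w w) (asc_w w) (extra_minima w))).
Qed.

Lemma weight_sumS (V : nmodType) k (g : nat -> nat -> nat -> V) :
  (0 < k)%N -> weight_sum k.+1 g = weight_sum k (insert_weight k g).
Proof.
move=> k_gt0; rewrite /weight_sum -[perm_words k.+1]/(allpairs_dep _ _ _) big_allpairs_dep.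
apply: eq_big_seq => w; rewrite mem_perm_words => /and3P[_ /eqP w_size w_lt].
have w_gt0 : (0 < size w)%N by rewrite w_size.
by have := sum_insert_slots w_lt w_gt0 g; rewrite w_size.
Qed.

Lemma sum_binS (V : nmodType) (f : nat -> V) m :
  \sum_(0 <= j < m.+1) (f j + f j.+1) *+ 'C(m, j) = \sum_(0 <= j < m.+2) f j *+ 'C(m.+1, j).
Proof.
under eq_bigr do rewrite mulrnDl.
rewrite big_split /= [RHS]big_nat_recl // bin0 mulr1n.
under [in RHS]eq_bigr do rewrite binS mulrnDr.
rewrite [in RHS]big_split /= (big_nat_recl m) // bin0 mulr1n.
by rewrite [X in _ = _ + (X + _)](big_nat_recr m) //= bin_small // mulr0n addr0 addrA.
Qed.

Lemma sum_bin_shift (V : nmodType) (f : nat -> V) m :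
  \sum_(0 <= j < m.+1) (f j *+ j + f j.+1 *+ (m - j)) *+ 'C(m, j)
  = (\sum_(0 <= i < m) f i.+1 *+ 'C(m.-1, i)) *+ m.*2.
Proof.
under eq_bigr do rewrite mulrnDl -!mulrnA.
rewrite big_split /= (big_nat_recl m) // mul0n mulr0n add0r.
under eq_bigr do rewrite -mul_bin_diag.
rewrite (big_nat_recr m) //= subnn mul0n mulr0n addr0.
under [X in _ + X]eq_bigr do rewrite -mul_bin_down.
rewrite -addnn mulrnDr -sumrMnl.
by congr (_ + _); apply: eq_bigr => i _; rewrite mulrnA mulrnAC.
Qed.

Definition binom_moment (V : nmodType) k (g : nat -> nat -> nat -> V) p e : V :=
  \sum_(0 <= j < (k.-1 - p.*2).+1) g p (p + j)%N e *+ 'C(k.-1 - p.*2, j).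

Lemma binom_moment_insert_weight (V : nmodType) k (g : nat -> nat -> nat -> V) p e :
  (p.*2 < k)%N ->
  binom_moment k (insert_weight k g) p e
  = binom_moment k.+1 g p e.+1 + binom_moment k.+1 g p e *+ p
    + binom_moment k.+1 g p.+1 e *+ (k.-1 - p.*2).*2.
Proof.
move=> hp; rewrite /binom_moment /insert_weight.
set m := (k.-1 - p.*2)%N; have -> : (k.+1.-1 - p.*2 = m.+1)%N by rewrite /m; lia.
under eq_bigr => j _.
  have -> : (p + j - p = j)%N by lia.
  have -> : (k.-1 - (p + j) - p = m - j)%N by rewrite /m; lia.
  rewrite -!addnS mulrnDl mulrnDl (mulrnAC _ p).
  over.
rewrite !big_split /= (sum_binS (fun j => g p (p + j)%N e.+1)) !sumrMnl.
rewrite (sum_binS (fun j => g p (p + j)%N e)) (sum_bin_shift (fun j => g p.+1 (p + j)%N e)).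
congr (_ + _); have hm : (k.-1 - p.*2 = m)%N by [].
clearbody m; case: m hm => [|m'] hm; first by rewrite !mulr0n.
have -> : (k.+1.-1 - p.+1.*2 = m')%N by move: hm; rewrite doubleS; lia.
by congr (_ *+ _); apply: eq_bigr => i _; rewrite addnS.
Qed.

Lemma weight_sum_eq (V : nmodType) k (g g' : nat -> nat -> nat -> V) : (0 < k)%N ->
  (forall p e, (p.*2 < k)%N -> binom_moment k g p e = binom_moment k g' p e) ->
  weight_sum k g = weight_sum k g'.
Proof.
elim: k g g' => // k IH g g' _ eq_gg'; case: k IH eq_gg' => [|k] IH eq_gg'.
  have := eq_gg' 0%N 0%N isT; rewrite /binom_moment /weight_sum /= !big_nat1 !big_cons !big_nil.
  by rewrite !mulr1n !addr0 !addn0.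
rewrite [LHS]weight_sumS // [RHS]weight_sumS //; apply: IH => // p e hp.
rewrite !binom_moment_insert_weight //.
rewrite (eq_gg' p e.+1) ?(eq_gg' p e); try lia; congr (_ + _).
case E: (k.+1.-1 - p.*2)%N => [|m]; first by rewrite !mulr0n.
by rewrite eq_gg' //; move: E; rewrite doubleS /=; lia.
Qed.

Lemma binom_moment_monomial (R : comNzRingType) k (c x y d : R) p e : (p.*2 < k)%N ->
  binom_moment k (fun p a e => c ^+ p * x ^+ (k.-1 - a) * y ^+ a * d ^+ e) p e
  = (c * x * y) ^+ p * (x + y) ^+ (k.-1 - p.*2) * d ^+ e.
Proof.
move=> hp; rewrite /binom_moment; set m := (k.-1 - p.*2)%N.
rewrite exprDn big_mkord mulr_sumr mulr_suml; apply: eq_bigr => [[j hj]] _ /=.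
have -> : (k.-1 - (p + j) = p + (m - j))%N by rewrite /m; lia.
by rewrite mulrnAr mulrnAl; congr (_ *+ _); rewrite !exprD !exprMn; ring.
Qed.

Lemma weight_sum_monomial_eq (R : comNzRingType) k (c x y c' x' y' d : R) : (0 < k)%N ->
  c * x * y = c' * x' * y' -> x + y = x' + y' ->
  weight_sum k (fun p a e => c ^+ p * x ^+ (k.-1 - a) * y ^+ a * d ^+ e)
  = weight_sum k (fun p a e => c' ^+ p * x' ^+ (k.-1 - a) * y' ^+ a * d ^+ e).
Proof.
move=> k_gt0 cxy sxy; apply: weight_sum_eq => // p e hp.
by rewrite !binom_moment_monomial // cxy sxy.
Qed.

Lemma sqrtC_roots (C : numClosedFieldType) (s q : C) :
  let r := sqrtC (s ^+ 2 - 4 * q) in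
  (s - r) / 2 + (s + r) / 2 = s /\ (s - r) / 2 * ((s + r) / 2) = q.
Proof.
move=> r; have two_neq0 : (2 : C) != 0 by rewrite pnatr_eq0.
split; first by field.
have -> : (s - r) / 2 * ((s + r) / 2) = (s ^+ 2 - r ^+ 2) / 4 by field.
by rewrite sqrtCK; field.
Qed.

Theorem theorem6p4 (C : numClosedFieldType) (n : nat) (u v w alpha : C) :
  (1 <= n)%N ->
  let x := ((w + v) - sqrtC ((w + v) ^+ 2 - 4 * u * v * w)) / 2 in
  let y := ((w + v) + sqrtC ((w + v) ^+ 2 - 4 * u * v * w)) / 2 in
  \sum_(s : 'S_n) u ^+ M s * v ^+ des s * w ^+ asc s
                   * alpha ^+ (LRmin s + RLmin s - 2)
  = \sum_(s : 'S_n) x ^+ des s * y ^+ asc s * alpha ^+ (LRmin s + RLmin s - 2).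
Proof.
move=> n_gt0 x y.
have [sum_xy prod_xy] : x + y = w + v /\ x * y = u * v * w.
  by have := sqrtC_roots (w + v) (u * v * w); rewrite /= [4 * (u * v * w)]mulrA [4 * (u * v)]mulrA.
transitivity (weight_sum n (fun p a e => u ^+ p * v ^+ (n.-1 - a) * w ^+ a * alpha ^+ e)).
  by rewrite -sum_perm_weight; apply: eq_bigr => s _; rewrite des_perm.
rewrite (@weight_sum_monomial_eq _ _ u v w 1 x y) //.
- by rewrite -sum_perm_weight; apply: eq_bigr => s _; rewrite expr1n mul1r des_perm.
- by rewrite mul1r prod_xy.
- by rewrite sum_xy addrC.
Qed.
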